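(* Let $\Gamma=(\mathcal{V},\mathcal{H})$ be an oriented hypergraph containing an $l$-duplicate family of $t$-twin vertices. Then $t$ is an eigenvalue of the normalized Laplacian $L$ of $\Gamma$ with multiplicity at least $l-1$, and $0$ is an eigenvalue of $L$ with multiplicity at least $l(t-1)$.
   Context: An oriented hypergraph is a pair $\Gamma=(\mathcal{V},\mathcal{H})$ where $\mathcal{V}=\{v_1,\ldots,v_N\}$ is a finite set and each hyperedge $h$ is a pair $(h_{in},h_{out})$ of disjoint nonempty subsets of $\mathcal{V}$; standing assumption: no isolated vertices. Vertices are co-oriented in $h$ if they lie in the same one of $h_{in},h_{out}$, anti-oriented if in different ones. $\deg(v)$ is the number of hyperedges containing $v$, $D$ the diagonal degree matrix; the adjacency matrix has $A_{ii}=0$ and $A_{ij}=\#\{h: v_i,v_j\text{ anti-oriented in }h\}-\#\{h:v_i,v_j\text{ co-oriented in }h\}$ for $i\ne j$; $L=\mathrm{Id}-D^{-1}A$. Two vertices are twins if they belong to exactly the same hyperedges and, in each such hyperedge, are co-oriented (so $A_{ij}=-\deg v_i=-\deg v_j$ and $A_{ik}=A_{jk}$ for $k\ne i,j$). A family $\mathcal{V}_1\sqcup\cdots\sqcup\mathcal{V}_l\subset\mathcal{V}$ of pairwise disjoint sets is an $l$-duplicate family of $t$-twin vertices if each $\mathcal{V}_i$ has $t$ elements which are pairwise twins, and for $i\ne j$, every $v\in\mathcal{V}_i$, $w\in\mathcal{V}_j$ satisfy $A_{vw}=0$ and $A_{vk}=A_{wk}$ for all vertices $v_k\notin\mathcal{V}_1\sqcup\cdots\sqcup\mathcal{V}_l$.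 *)

From mathcomp Require Import all_boot all_order all_algebra.
Set Implicit Arguments. Unset Strict Implicit. Unset Printing Implicit Defensive.
Import Order.TTheory GRing.Theory Num.Theory.
Local Open Scope ring_scope.

(* Vertices are 'I_N; a hyperedge h is a pair (h_in, h_out) = (h.1, h.2). *)
Definition hedge (N : nat) := ({set 'I_N} * {set 'I_N})%type.

Definition in_hedge N (v : 'I_N) (h : hedge N) : bool := (v \in h.1) || (v \in h.2).

Definition co_oriented N (v w : 'I_N) (h : hedge N) : bool :=
  ((v \in h.1) && (w \in h.1)) || ((v \in h.2) && (w \in h.2)).

Definition anti_oriented N (v w : 'I_N) (h : hedge N) : bool :=
  ((v \in h.1) && (w \in h.2)) || ((v \in h.2) && (w \in h.1)).

Definition oriented_hypergraph N (H : seq (hedge N)) : Prop :=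
  uniq H /\ forall h, h \in H -> [/\ [disjoint h.1 & h.2], h.1 != set0 & h.2 != set0].

Definition deg N (H : seq (hedge N)) (v : 'I_N) : nat := count (in_hedge v) H.

Definition no_isolated N (H : seq (hedge N)) : Prop := forall v : 'I_N, (0 < deg H v)%N.

Definition adj N (H : seq (hedge N)) (i j : 'I_N) : int :=
  if i == j then 0
  else (count (anti_oriented i j) H)%:Z - (count (co_oriented i j) H)%:Z.

Definition nlaplacian (R : fieldType) N (H : seq (hedge N)) : 'M[R]_N :=
  \matrix_(i, j) ((i == j)%:R - ((adj H i j)%:~R / (deg H i)%:R)).

Definition twins N (H : seq (hedge N)) (v w : 'I_N) : Prop :=
  forall h, h \in H -> (in_hedge v h = in_hedge w h) /\ (in_hedge v h -> co_oriented v w h).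

Definition duplicate_family N (H : seq (hedge N)) (l t : nat) (V : 'I_l -> {set 'I_N}) : Prop :=
  [/\ forall i j : 'I_l, i != j -> [disjoint V i & V j],
      forall i : 'I_l, #|V i| = t,
      forall (i : 'I_l) (v w : 'I_N), v \in V i -> w \in V i -> v != w -> twins H v w &
      forall (i j : 'I_l) (v w : 'I_N), i != j -> v \in V i -> w \in V j ->
        adj H v w = 0 /\
        (forall k : 'I_N, k \notin \bigcup_(m < l) V m -> adj H v k = adj H w k)].

From mathcomp Require Import all_boot all_order all_algebra.
From mathcomp Require Import ring zify.
Set Implicit Arguments. Unset Strict Implicit. Unset Printing Implicit Defensive.
Import Order.TTheory GRing.Theory Num.Theory.
Local Open Scope ring_scope.

(* Write a left eigenvector of L = Id - D^-1 A as y = x D; then y L = a y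
   becomes x A = (1 - a) x D.  The rows of A at two twins v <> w agree outside
   the columns v, w, where A_vw = A_wv = -deg v and A_vv = A_ww = 0, so
   x = 1_v - 1_w solves this with a = 0.  For two classes V_i <> V_j of the
   duplicate family, x = 1_V_i - 1_V_j solves it with a = t: inside a class
   A restricts to deg (Id - all-ones), between classes it vanishes, and at
   vertices outside all classes the contributions of V_i and V_j cancel.
   Fixing a base class V_0 and a base vertex in every class gives l - 1
   vectors of the second kind and l (t - 1) of the first; each has a pivot
   vertex at which it is the only nonzero member of its family, so each
   family is linearly independent. *)

Lemma card_le_rank_pivots (F : fieldType) m n (E : 'M[F]_(m, n)) (T : finType)
    (u : T -> 'rV[F]_n) (p : T -> 'I_n) :
  (forall s, u s <= E)%MS ->
  (forall s s', s != s' -> u s 0 (p s') = 0) -> (forall s, u s 0 (p s) != 0) ->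
  (#|T| <= \rank E)%N.
Proof.
move=> uE u_off u_piv.
pose M := \matrix_(k < #|T|) u (enum_val k).
pose B := \matrix_(c < n, k < #|T|)
  ((c == p (enum_val k))%:R / u (enum_val k) 0 (p (enum_val k))).
have MB : M *m B = 1%:M.
  apply/matrixP => k k'; rewrite !mxE (bigD1 (p (enum_val k'))) //= big1 => [|c].
    rewrite !mxE eqxx mul1r addr0; have [<-|kk'] := eqVneq k k'; first exact: divff.
    by rewrite u_off ?mul0r // (inj_eq enum_val_inj).
  by rewrite !mxE => /negbTE->; rewrite mul0r mulr0.
apply: leq_trans (mxrankS (_ : (M <= E)%MS)).
  by rewrite -{1}(mxrank1 F #|T|) -MB mxrankM_maxl.
by apply/row_subP => k; rewrite rowK.
Qed.

Lemma sum_indicator (R : pzSemiRingType) (T : finType) (A : {pred T}) (F : T -> R) :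
  \sum_k (k \in A)%:R * F k = \sum_(k in A) F k.
Proof. by rewrite [RHS]big_mkcond; apply: eq_bigr => k _; rewrite mulr_natl mulrb. Qed.

Lemma mem_disjoint_family (I : eqType) (T : finType) (V : I -> {set T}) i j x
    (Vdisj : forall i j, i != j -> [disjoint V i & V j]) (xVi : x \in V i) :
  (x \in V j) = (i == j).
Proof.
have [<-//|ij] := eqVneq i j; exact: disjointFr (Vdisj _ _ ij) xVi.
Qed.

Lemma disjoint_family_labelling (T : finType) l t (V : 'I_l -> {set T}) :
  (forall i j, i != j -> [disjoint V i & V j]) -> (forall i, #|V i| = t) ->
  exists2 g : 'I_l * 'I_t -> T, injective g & forall s, g s \in V s.1.
Proof.
move=> Vdisj Vcard; exists (fun s => enum_val (cast_ord (esym (Vcard s.1)) s.2)); last first.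
  by move=> s; apply: enum_valP.
move=> [i j] [i' j'] /= E; have ii' : i = i'.
  apply/eqP; rewrite -(mem_disjoint_family i' Vdisj (enum_valP (cast_ord (esym (Vcard i)) j))) E.
  exact: enum_valP.
by subst i'; move/enum_val_inj/cast_ord_inj: E => ->.
Qed.

Lemma adjC N (H : seq (hedge N)) (i j : 'I_N) : adj H i j = adj H j i.
Proof.
rewrite /adj eq_sym; congr (if _ then _ else _%:Z - _%:Z); apply: eq_count => h.
  by rewrite /anti_oriented orbC andbC [X in _ || X]andbC.
by rewrite /co_oriented andbC [X in _ || X]andbC.
Qed.

(* x A = (1 - a) x D for x = 1_A - 1_B, i.e. D x is a left a-eigenvector of L. *)
Definition indicator_diff_eigen N (H : seq (hedge N)) (a : int) (A B : {set 'I_N}) : Prop :=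
  forall c : 'I_N, \sum_(k in A) adj H k c - \sum_(k in B) adj H k c
                   = (1 - a) * (deg H c)%:R * ((c \in A)%:R - (c \in B)%:R).

Definition deg_indicator_diff (R : pzRingType) N (H : seq (hedge N)) (A B : {set 'I_N}) :
  'rV[R]_N :=
  \row_c ((deg H c)%:R * ((c \in A)%:R - (c \in B)%:R)).

Lemma deg_indicator_diff_eigen (R : numFieldType) N (H : seq (hedge N)) (a : int)
    (A B : {set 'I_N}) :
  no_isolated H -> indicator_diff_eigen H a A B ->
  (deg_indicator_diff R H A B <= eigenspace (nlaplacian R H) a%:~R)%MS.
Proof.
move=> nI eqAB; apply/sub_kermxP/rowP => c; rewrite !mxE.
have term k : deg_indicator_diff R H A B 0 k * (nlaplacian R H - a%:~R%:M) k c
    = (k == c)%:R * ((1 - a%:~R) * (deg H k)%:R * ((k \in A)%:R - (k \in B)%:R))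
      - ((k \in A)%:R - (k \in B)%:R) * (adj H k c)%:~R.
  have dk : (deg H k)%:R != 0 :> R by rewrite pnatr_eq0 -lt0n nI.
  rewrite !mxE; move: ((k \in A)%:R - (k \in B)%:R : R) => y.
  by case: eqP => _; rewrite ?mulr1n ?mulr0n /=; field.
rewrite (eq_bigr _ (fun k _ => term k)) sumrB.
have -> : \sum_k ((k \in A)%:R - (k \in B)%:R) * (adj H k c)%:~R
    = ((1 - a) * (deg H c)%:R * ((c \in A)%:R - (c \in B)%:R))%:~R :> R.
  rewrite -eqAB (eq_bigr _ (fun k _ => mulrBl _ _ _)) sumrB !sum_indicator.
  by rewrite intrD intrN !rmorph_sum.
rewrite (bigD1 c) //= big1 => [|k /negbTE->]; last by rewrite mul0r.
rewrite eqxx mul1r addr0 !intrM intrD intrN rmorphB /= !rmorph_nat.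
by rewrite subrr.
Qed.

Lemma card_le_rank_eigenspace (R : numFieldType) N (H : seq (hedge N)) (a : int)
    (T : finType) (A B : T -> {set 'I_N}) (p : T -> 'I_N) :
  no_isolated H -> (forall s, indicator_diff_eigen H a (A s) (B s)) ->
  (forall s s', (p s' \in A s) = (s == s')) -> (forall s s', p s' \notin B s) ->
  (#|T| <= \rank (eigenspace (nlaplacian R H) a%:~R))%N.
Proof.
move=> nI eigAB pA pB.
apply: (card_le_rank_pivots (u := fun s => deg_indicator_diff R H (A s) (B s)) (p := p)).
- by move=> s; apply: deg_indicator_diff_eigen.
- by move=> s s' ss'; rewrite mxE pA (negbTE ss') (negbTE (pB _ _)) subrr mulr0.
- by move=> s; rewrite mxE pA eqxx (negbTE (pB _ _)) subr0 mulr1 pnatr_eq0 -lt0n nI.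
Qed.

Section Twins.

Variables (N : nat) (H : seq (hedge N)) (v w : 'I_N).
Hypotheses (oH : oriented_hypergraph H) (vw_twins : twins H v w).

Lemma twins_mem h : h \in H -> (v \in h.1) = (w \in h.1) /\ (v \in h.2) = (w \in h.2).
Proof.
move=> hH; have [dj _ _] := oH.2 h hH; have [ein co] := vw_twins hH.
have := disjointFr (x := v) dj; have := disjointFr (x := w) dj.
move: ein co; rewrite /in_hedge /co_oriented.
case: (v \in h.1); case: (v \in h.2); case: (w \in h.1); case: (w \in h.2); intuition.
Qed.

Lemma twins_deg : deg H v = deg H w.
Proof.
apply: eq_in_count => h /twins_mem[e1 e2]; by rewrite /in_hedge e1 e2.
Qed.

Lemma twins_adj : v != w -> adj H v w = - (deg H v)%:Z.
Proof.
move=> vw; rewrite /adj (negbTE vw).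
have -> : count (anti_oriented v w) H = 0%N.
  rewrite -(count_pred0 H); apply: eq_in_count => h hH /=; have [dj _ _] := oH.2 h hH.
  rewrite /anti_oriented; have [<- <-] := twins_mem hH.
  by case: (boolP (v \in h.1)) => [/(disjointFr dj)->|]; rewrite ?andbF.
have -> : count (co_oriented v w) H = deg H v.
  by apply: eq_in_count => h /twins_mem[e1 e2]; rewrite /co_oriented -e1 -e2 !andbb.
by rewrite sub0r.
Qed.

Lemma twins_adj_other c : c != v -> c != w -> adj H v c = adj H w c.
Proof.
move=> cv cw; rewrite /adj eq_sym (negbTE cv) eq_sym (negbTE cw).
congr (_%:Z - _%:Z); apply: eq_in_count => h /twins_mem[e1 e2].
  by rewrite /anti_oriented e1 e2.
by rewrite /co_oriented e1 e2.
Qed.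

Lemma twins_indicator_diff_eigen : v != w -> indicator_diff_eigen H 0 [set v] [set w].
Proof.
move=> vw c; rewrite !big_set1 !in_set1 subr0 mul1r natz.
have [->|cv] := eqVneq c v.
  by rewrite (negbTE vw) adjC twins_adj // /adj eqxx; lia.
have [->|cw] := eqVneq c w.
  by rewrite twins_adj // /adj eqxx -twins_deg; lia.
by rewrite twins_adj_other //; lia.
Qed.

End Twins.

Section DuplicateFamily.

Variables (N l t : nat) (H : seq (hedge N)) (V : 'I_l -> {set 'I_N}).
Hypotheses (oH : oriented_hypergraph H) (dupV : duplicate_family H t V).

Lemma sum_adj_class i c :
  c \in V i -> \sum_(k in V i) adj H k c = (1 - t%:Z) * (deg H c)%:R.
Proof.
case: dupV => _ Vcard Vtwins _ cV.
have adj_class k : k \in V i -> adj H k c = (k == c)%:R * (deg H c)%:R - (deg H c)%:R.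
  move=> kV; have [->|kc] := eqVneq k c; first by rewrite /adj eqxx mul1r subrr.
  have ck : c != k by rewrite eq_sym.
  by rewrite adjC (twins_adj oH (Vtwins i c k cV kV ck) ck) natz; lia.
rewrite (eq_bigr _ adj_class) sumrB sumr_const Vcard (bigD1 c) //= eqxx mul1r.
rewrite big1 => [|k /andP[_ /negbTE->]]; last by rewrite mul0r.
rewrite addr0 natz; lia.
Qed.

Lemma sum_adj_other_class i j c : i != j -> c \in V j -> \sum_(k in V i) adj H k c = 0.
Proof.
by case: dupV => _ _ _ Vdup ij cV; rewrite big1 // => k kV; rewrite (Vdup i j k c ij kV cV).1.
Qed.

Lemma sum_adj_outside i j c : (0 < t)%N -> c \notin \bigcup_m V m ->
  \sum_(k in V i) adj H k c = \sum_(k in V j) adj H k c.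
Proof.
case: dupV => _ Vcard _ Vdup t_gt0 cout; have [<-//|ij] := eqVneq i j.
have /set0Pn[u uV] : V i != set0 by rewrite -card_gt0 Vcard.
have /set0Pn[w wV] : V j != set0 by rewrite -card_gt0 Vcard.
rewrite (eq_bigr (fun=> adj H w c)) => [|k kV]; last exact: (Vdup i j k w ij kV wV).2.
rewrite [RHS](eq_bigr (fun=> adj H u c)) => [|k kV]; last by rewrite (Vdup i j u k ij uV kV).2.
by rewrite !sumr_const !Vcard (Vdup i j u w ij uV wV).2.
Qed.

Lemma duplicate_indicator_diff_eigen i j : (0 < t)%N -> i != j ->
  indicator_diff_eigen H t%:Z (V i) (V j).
Proof.
case: dupV => Vdisj _ _ _ t_gt0 ij c.
case: (boolP (c \in \bigcup_m V m)) => [/bigcupP[m _ cV]|cout]; last first.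
  have cVi : c \notin V i by apply: contra cout => cV; apply/bigcupP; exists i.
  have cVj : c \notin V j by apply: contra cout => cV; apply/bigcupP; exists j.
  by rewrite (sum_adj_outside i j) // (negbTE cVi) (negbTE cVj) !subrr mulr0.
rewrite !(mem_disjoint_family _ Vdisj cV).
have [mi|mi] := eqVneq m i.
  subst m; have ji : j != i by rewrite eq_sym.
  by rewrite (sum_adj_class cV) (sum_adj_other_class ji cV) (negbTE ij) natz; lia.
have [mj|mj] := eqVneq m j.
  by subst m; rewrite (sum_adj_class cV) (sum_adj_other_class ij cV) natz; lia.
have im : i != m by rewrite eq_sym.
have jm : j != m by rewrite eq_sym.
by rewrite (sum_adj_other_class im cV) (sum_adj_other_class jm cV) subrr mulr0.
Qed.

End DuplicateFamily.

Theorem mainTheorem3 (R : realFieldType) (N : nat) (H : seq (hedge N))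
  (l t : nat) (V : 'I_l -> {set 'I_N}) :
  oriented_hypergraph H -> no_isolated H ->
  (0 < t)%N -> duplicate_family H t V ->
  (l.-1 <= \rank (eigenspace (nlaplacian R H) t%:R))%N /\
  (l * t.-1 <= \rank (eigenspace (nlaplacian R H) 0))%N.
Proof.
move=> oH nI; case: t => // t _; case: l V => [|l] V dupV; first by [].
have [Vdisj Vcard Vtwins _] := dupV.
have [g g_inj gV] := disjoint_family_labelling Vdisj Vcard.
have lift0_neq0 k : (lift ord0 k == ord0 :> 'I_t.+1) = false.
  by rewrite eq_sym (negbTE (neq_lift _ _)).
split.
  have := card_le_rank_eigenspace R (a := t.+1) (A := fun i : 'I_l => V (lift ord0 i))
    (B := fun=> V ord0) (p := fun i => g (lift ord0 i, ord0)) nI.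
  rewrite card_ord -pmulrn; apply=> [i|i i'|i i'].
  - by apply: duplicate_indicator_diff_eigen => //; rewrite eq_sym neq_lift.
  - by rewrite (mem_disjoint_family _ Vdisj (gV _)) (inj_eq lift_inj) eq_sym.
  - by rewrite (mem_disjoint_family _ Vdisj (gV _)).
have := card_le_rank_eigenspace R (a := 0)
  (A := fun s : 'I_l.+1 * 'I_t => [set g (s.1, lift ord0 s.2)])
  (B := fun s => [set g (s.1, ord0)]) (p := fun s => g (s.1, lift ord0 s.2)) nI.
rewrite card_prod !card_ord mulr0z; apply=> [[i j]|[i j] [i' j']|[i j] [i' j']] /=.
- have vw : g (i, lift ord0 j) != g (i, ord0).
    by rewrite (inj_eq g_inj) xpair_eqE lift0_neq0 andbF.
  exact: twins_indicator_diff_eigen oH (Vtwins i _ _ (gV (i, _)) (gV (i, _)) vw) vw.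
- by rewrite in_set1 (inj_eq g_inj) !xpair_eqE (inj_eq lift_inj) eq_sym [j' == j]eq_sym.
- by rewrite in_set1 (inj_eq g_inj) xpair_eqE lift0_neq0 andbF.
Qed.
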